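(* Let $K$ be a field, $I\subset R=K[x_1,\ldots,x_n]$ a square-free monomial ideal, and $1\le i\le n$. If $I$ has the copersistence property, then the deletion $I\setminus x_i$ has the copersistence property.
   Context: An ideal $I$ in a commutative Noetherian ring $R$ has the copersistence property if $\mathrm{Ass}_R(R/I^k)\supseteq\mathrm{Ass}_R(R/I^{k+1})$ for all $k\ge1$. If $\{u_1,\ldots,u_m\}$ is the minimal monomial generating set of $I$, the deletion $I\setminus x_i$ is the monomial ideal (in the polynomial ring over $K$ in the variables other than $x_i$) generated by the polynomials obtained from $u_1,\ldots,u_m$ by setting $x_i=0$, i.e. by those $u_k$ not divisible by $x_i$. *)

From mathcomp Require Import all_boot all_order all_algebra.
From mathcomp Require Import mpoly.
Set Implicit Arguments. Unset Strict Implicit. Unset Printing Implicit Defensive.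
Import GRing.Theory.
Local Open Scope ring_scope.

Section Ideals.
Variable R : comNzRingType.

Definition is_ideal (I : R -> Prop) : Prop :=
  [/\ I 0, (forall a b, I a -> I b -> I (a + b)) & (forall r a, I a -> I (r * a))].

Definition prime_ideal (P : R -> Prop) : Prop :=
  [/\ is_ideal P, ~ P 1 & (forall a b, P (a * b) -> P a \/ P b)].

Definition gen_ideal (s : seq R) : R -> Prop :=
  fun f => exists c : 'I_(size s) -> R, f = \sum_(j < size s) c j * s`_j.

Definition ideal_pow (I : R -> Prop) (k : nat) : R -> Prop :=
  fun f => exists (m : nat) (c : 'I_m -> R) (a : 'I_m -> 'I_k -> R),
    (forall j l, I (a j l)) /\ f = \sum_(j < m) c j * \prod_(l < k) a j l.

(* P \in Ass_R(R/J): P is a prime ideal which is the annihilator (J : f)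
   of the class of some f in R/J. *)
Definition Ass (J : R -> Prop) (P : R -> Prop) : Prop :=
  prime_ideal P /\ exists f : R, forall g, P g <-> J (g * f).

Definition copersistent (I : R -> Prop) : Prop :=
  forall k : nat, (1 <= k)%N -> forall P, Ass (ideal_pow I k.+1) P -> Ass (ideal_pow I k) P.

End Ideals.

Definition monomial_ideal (K : fieldType) (n : nat) (s : seq 'X_{1..n}) :
  {mpoly K[n]} -> Prop :=
  gen_ideal [seq 'X_[m] | m <- s].

Definition squarefree_mon (n : nat) (m : 'X_{1..n}) : bool :=
  [forall j : 'I_n, (m j <= 1)%N].

Definition mon_dvd (n : nat) (u v : 'X_{1..n}) : bool :=
  [forall j : 'I_n, (u j <= v j)%N].

Definition minimal_mon_gens (n : nat) (s : seq 'X_{1..n}) : Prop :=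
  uniq s /\ forall u v, u \in s -> v \in s -> mon_dvd u v -> u = v.

(* Deletion: the variables other than x_i of K[x_0..x_n] are identified with
   those of K[y_0..y_(n-1)] via y_j |-> x_(lift i j). *)
Definition delete_mon (n : nat) (i : 'I_n.+1) (m : 'X_{1..n.+1}) : 'X_{1..n} :=
  [multinom m (lift i j) | j < n].

Definition deletion_gens (n : nat) (i : 'I_n.+1) (s : seq 'X_{1..n.+1}) :
  seq 'X_{1..n} :=
  map (@delete_mon n i) (filter (fun m : 'X_{1..n.+1} => m i == 0%N) s).
Arguments monomial_ideal K {n} s _.

From mathcomp Require Import all_boot all_order all_algebra.
From mathcomp Require Import mpoly.
From mathcomp Require Import zify ring.
Set Implicit Arguments. Unset Strict Implicit. Unset Printing Implicit Defensive.
Import GRing.Theory.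

(* Write P_S for the prime ideal generated by the variables x_j, j \in S.  For a
   square-free monomial ideal I, copersistence is equivalent to the equality
   I^k = I^(k) for all k, where the symbolic power I^(k) is the intersection of
   the P_S^k over the vertex covers S of I.  If I^k = I^(k), the associated
   primes of every power of I are exactly the P_T with T a minimal cover.
   Conversely, if x^m lies in I^(k) but not in I^k, enlarge m to a monomial x^w
   maximal outside I^k; then (I^k : x^w) = P_T is prime, copersistence pushes it
   down to Ass(R/I), so T is a minimal cover, and this is incompatible with
   x^m \in I^(k).  Finally the equality I^k = I^(k) survives the deletion of x_i:
   covers of the deletion extend to covers of I, and monomials free of x_i lie
   in a power of I exactly when they lie in that power of the deletion. *)

Section Ideals.
Variable R : comNzRingType.
Local Open Scope ring_scope.
Implicit Types (I P : R -> Prop).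

Lemma ideal_big I (J : Type) (r : seq J) (Q : pred J) (F : J -> R) :
  is_ideal I -> (forall j, Q j -> I (F j)) -> I (\sum_(j <- r | Q j) F j).
Proof. by case=> I0 ID _; apply: big_ind. Qed.

Lemma ideal_pow0 I p : ideal_pow I 0 p.
Proof.
exists 1%N, (fun _ => p), (fun _ _ => 0); split; first by move=> j [].
by rewrite big_ord1 big_ord0 mulr1.
Qed.

Lemma ideal_powS I k a p : I a -> ideal_pow I k p -> ideal_pow I k.+1 (a * p).
Proof.
move=> Ia [m [c [b [Ib ->]]]].
exists m, c, (fun j l => if unlift ord0 l is Some l' then b j l' else a); split.
  by move=> j l; case: (unlift ord0 l).
rewrite mulr_sumr; apply: eq_bigr => j _.
rewrite big_ord_recl /= unlift_none mulrCA; congr (_ * (_ * _)).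
by apply: eq_bigr => l _; rewrite liftK.
Qed.

Lemma is_ideal_pow I k : is_ideal (ideal_pow I k).
Proof.
split.
- exists 0%N, (fun _ => 0), (fun _ _ => 0); split; first by case.
  by rewrite big_ord0.
- move=> _ _ [m1 [c1 [a1 [h1 ->]]]] [m2 [c2 [a2 [h2 ->]]]].
  exists (m1 + m2)%N.
  exists (fun j => match split j with inl j1 => c1 j1 | inr j2 => c2 j2 end).
  exists (fun j => match split j with inl j1 => a1 j1 | inr j2 => a2 j2 end).
  split; first by move=> j l; case: (split j).
  rewrite big_split_ord /=; congr (_ + _); apply: eq_bigr => j _.
    by rewrite -[lshift _ _]/(unsplit (inl j)) unsplitK.
  by rewrite -[rshift _ _]/(unsplit (inr j)) unsplitK.
- move=> r _ [m [c [a [h ->]]]]; exists m, (fun j => r * c j), a; split => //.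
  by rewrite mulr_sumr; apply: eq_bigr => j _; rewrite mulrA.
Qed.

Lemma prime_ideal_exp P x k : prime_ideal P -> P (x ^+ k.+1) -> P x.
Proof.
case=> _ _ Pmul; elim: k => [|k IHk]; first by rewrite expr1.
by rewrite exprS => /Pmul [|/IHk].
Qed.

Lemma copersistent_Ass_pow1 I k P : copersistent I -> (0 < k)%N ->
  Ass (ideal_pow I k) P -> Ass (ideal_pow I 1) P.
Proof.
move=> coI; case: k => // k _; elim: k => // k IHk AP.
by apply: IHk; apply: coI.
Qed.

End Ideals.

Section Monomials.
Variable n : nat.
Implicit Types (m g w : 'X_{1..n}) (s : seq 'X_{1..n}) (S T : {set 'I_n}).

(* x^m \in I^k, for I the ideal generated by the x^g, g \in s. *)
Fixpoint in_pow s k m : bool :=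
  if k is k'.+1 then has (fun g => (g <= m)%MM && in_pow s k' (m - g)%MM) s
  else true.

Definition deg S m := \sum_(j in S) m j.

(* I is contained in P_S. *)
Definition cover s S := all (fun g => 0 < deg S g) s.

Definition private_gen s S v := has (fun g => (0 < g v) && (deg (S :\ v) g == 0)) s.

Definition mincover s S := cover s S && [forall v in S, private_gen s S v].

Definition sqfree s := forall g, g \in s -> forall j, g j <= 1.

Lemma lepm_add m1 m2 m3 m4 : (m1 <= m2)%MM -> (m3 <= m4)%MM -> (m1 + m3 <= m2 + m4)%MM.
Proof.
move=> /mnm_lepP le12 /mnm_lepP le34; apply/mnm_lepP => j; rewrite !mnmDE.
exact: leq_add.
Qed.

Lemma lepm_U m j : (U_(j) <= m)%MM = (0 < m j).
Proof.
apply/mnm_lepP/idP => [/(_ j)|mj i]; first by rewrite mnm1E eqxx.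
by rewrite mnm1E; case: eqP => [<-|].
Qed.

Lemma degD S m1 m2 : deg S (m1 + m2)%MM = deg S m1 + deg S m2.
Proof. by rewrite /deg -big_split; apply: eq_bigr => j _; rewrite mnmDE. Qed.

Lemma degB S m1 m2 : (m2 <= m1)%MM -> deg S (m1 - m2)%MM = deg S m1 - deg S m2.
Proof. by move=> le; rewrite -{2}(submK le) degD addnK. Qed.

Lemma deg_lepm S m1 m2 : (m1 <= m2)%MM -> deg S m1 <= deg S m2.
Proof. by move/mnm_lepP=> le; apply: leq_sum => j _. Qed.

Lemma deg_subset S T m : T \subset S -> deg T m <= deg S m.
Proof.
move=> TS; rewrite /deg [leqRHS](big_setID T) /= (setIidPr TS); exact: leq_addr.
Qed.

Lemma leq_deg S m j : j \in S -> m j <= deg S m.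
Proof. by move=> jS; rewrite /deg (bigD1 j) //=; exact: leq_addr. Qed.

Lemma deg_gt0P S m : reflect (exists2 j, j \in S & 0 < m j) (0 < deg S m).
Proof.
apply: (iffP idP) => [|[j jS mj]]; last exact: leq_trans mj (leq_deg _ jS).
rewrite lt0n sum_nat_eq0 => /forall_inPn [j jS mj]; exists j => //.
by rewrite lt0n.
Qed.

Lemma deg0 S : deg S 0%MM = 0.
Proof. by rewrite /deg big1 // => j _; rewrite mnm0E. Qed.

Lemma deg_set0 m : deg set0 m = 0.
Proof. by rewrite /deg big_set0. Qed.

Lemma degU S v : deg S U_(v)%MM = (v \in S).
Proof.
rewrite /deg; have [vS|vNS] := boolP (v \in S).
  rewrite (bigD1 v) //= big1 ?mnm1E ?eqxx // => j /andP [_ jv].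
  by rewrite mnm1E eq_sym (negbTE jv).
by rewrite big1 // => j jS; rewrite mnm1E; case: eqP => // vj; rewrite vj jS in vNS.
Qed.

Lemma degD1 S v m : v \in S -> deg S m = m v + deg (S :\ v) m.
Proof.
move=> vS; rewrite /deg (bigD1 v) //=; congr (_ + _).
by apply: eq_bigl => j; rewrite !inE andbC.
Qed.

Lemma in_pow_lepm s k m m' : (m <= m')%MM -> in_pow s k m -> in_pow s k m'.
Proof.
elim: k m m' => //= k IHk m m' le /hasP [g gs /andP [gm ip]].
apply/hasP; exists g => //; rewrite (lepm_trans gm le) /=.
apply: IHk ip; apply/mnm_lepP => j; rewrite !mnmBE.
by move/mnm_lepP: le => le; exact: leq_sub2r.
Qed.

Lemma in_powD s a b m1 m2 :
  in_pow s a m1 -> in_pow s b m2 -> in_pow s (a + b) (m1 + m2)%MM.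
Proof.
elim: a m1 => [|a IHa] m1 /=; first by move=> _; apply: in_pow_lepm; exact: lem_addl.
move=> /hasP [g gs /andP [gm ip]] ip2; apply/hasP; exists g => //.
rewrite (lepm_trans gm (lem_addr _ _)) /= [(m1 + m2)%MM]addmC -addmBA // addmC.
exact: IHa.
Qed.

Lemma in_pow1_gen s g : g \in s -> in_pow s 1 g.
Proof. by move=> gs; apply/hasP; exists g; rewrite ?lepm_refl. Qed.

Lemma in_pow_gen_exp s k g : g \in s -> in_pow s k (g *+ k)%MM.
Proof.
move=> gs; elim: k => [|k IHk] //; rewrite mulmS.
exact: (in_powD (in_pow1_gen gs) IHk).
Qed.

Lemma cover_in_pow_deg s S k m : cover s S -> in_pow s k m -> k <= deg S m.
Proof.
move=> /allP cov; elim: k m => //= k IHk m /hasP [g gs /andP [gm ip]].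
have := IHk _ ip; rewrite degB //; have := cov g gs; have := deg_lepm S gm; lia.
Qed.

(* Exponents of a product of k square-free generators are at most k, so raising
   exponents that are already at least k cannot help. *)
Lemma in_pow_trunc s k m w : sqfree s -> (forall j, 0 < m j -> k <= w j) ->
  in_pow s k (w + m)%MM -> in_pow s k w.
Proof.
move=> sq; elim: k w => //= k IHk w wm /hasP [g gs /andP [gwm ip]].
have gw : (g <= w)%MM.
  apply/mnm_lepP => j; move/mnm_lepP: gwm => /(_ j); rewrite mnmDE.
  have := sq g gs j; case: (posnP (m j)) => [->|/wm]; lia.
apply/hasP; exists g => //; rewrite gw /=; apply: (IHk _ _ (_ : in_pow s k (w - g + m)%MM)).
  by move=> j /wm; rewrite mnmBE; have := sq g gs j; lia.
by rewrite addmC addmBA // addmC.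
Qed.

Lemma mincover_in_pow s S k m : sqfree s -> mincover s S -> k <= deg S m ->
  (forall j, j \notin S -> k <= m j) -> in_pow s k m.
Proof.
move=> sq /andP [_ /forall_inP prS]; elim: k m => //= k IHk m degm offS.
have /deg_gt0P [v vS mv] : 0 < deg S m by exact: leq_trans degm.
have /hasP [g gs /andP [gv /eqP gS]] := prS v vS.
have gSv j : j \in S :\ v -> g j = 0.
  by move=> jS; apply/eqP; rewrite -leqn0 -gS leq_deg.
have gm : (g <= m)%MM.
  apply/mnm_lepP => j; have := sq g gs j.
  have [jS|jNS] := boolP (j \in S); last by have := offS j jNS; lia.
  have [->|jv] := eqVneq j v; first lia.
  by rewrite gSv // !inE jv.
apply/hasP; exists g => //; rewrite gm /=; apply: IHk => [|j jS].
  by rewrite degB // (degD1 g vS) gS addn0; have := sq g gs v; lia.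
by rewrite mnmBE; have := offS j jS; have := sq g gs j; lia.
Qed.

Lemma in_pow1_cover s m : sqfree s -> (forall S, cover s S -> 0 < deg S m) -> in_pow s 1 m.
Proof.
move=> sq covm; apply/negPn/negP => /= /hasPn nm.
pose Z := [set j | m j == 0].
suff /covm : cover s Z by rewrite /deg big1 // => j; rewrite inE => /eqP.
apply/allP => g gs; apply/deg_gt0P.
have /forallPn [j] : ~~ [forall j, g j <= m j].
  by have := nm g gs; rewrite andbT; apply: contra => /forallP ?; apply/mnm_lepP.
rewrite -ltnNge => mg; exists j; last lia.
by rewrite inE; have := sq g gs j; lia.
Qed.

Lemma cover_setD1 s S v : cover s S -> v \in S -> ~~ private_gen s S v -> cover s (S :\ v).
Proof.
move=> /allP cov vS /hasPn noprv; apply/allP => g gs; rewrite lt0n; apply/negP => /eqP gSv.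
have := noprv g gs; rewrite gSv eqxx andbT -leqNgt leqn0 => /eqP gv.
by have := cov g gs; rewrite (degD1 g vS) gv gSv.
Qed.

Lemma exists_mincover s S : cover s S -> exists2 T : {set 'I_n}, T \subset S & mincover s T.
Proof.
have [c] := ubnP #|S|; elim: c S => // c IHc S ltSc covS.
have [prS|/forall_inPn [v vS noprv]] := boolP [forall v in S, private_gen s S v].
  by exists S; rewrite ?subxx // /mincover covS.
have [|T TS minT] := IHc (S :\ v) _ (cover_setD1 covS vS noprv).
  by rewrite (cardsD1 v S) vS in ltSc.
by exists T => //; apply: subset_trans TS (subD1set _ _).
Qed.

Definition deficit k w := \sum_(j < n) (k - w j).

Lemma deficitU k w j : w j < k -> deficit k (w + U_(j))%MM < deficit k w.
Proof.
move=> wj; rewrite /deficit [ltnLHS](bigD1 j) // [ltnRHS](bigD1 j) //=.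
rewrite (eq_bigr (fun i => k - w i)) => [|i ij]; last first.
  by rewrite mnmDE mnm1E eq_sym (negbTE ij) addn0.
by rewrite ltn_add2r mnmDE mnm1E eqxx; lia.
Qed.

Lemma exists_saturated s k w : ~~ in_pow s k w -> exists w', [/\ (w <= w')%MM,
  ~~ in_pow s k w' & forall j, in_pow s k (w' + U_(j))%MM || (k <= w' j)].
Proof.
have [c] := ubnP (deficit k w); elim: c w => // c IHc w ltwc nw.
have [sat|/forallPn [j]] := boolP [forall j, in_pow s k (w + U_(j))%MM || (k <= w j)].
  by exists w; split; rewrite ?lepm_refl // => j; apply: (forallP sat).
rewrite negb_or -ltnNge => /andP [nwj wj].
have [|w' [ww' nw' sat]] := IHc (w + U_(j))%MM _ nwj.
  exact: leq_trans (deficitU wj) _.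
by exists w'; split => //; exact: lepm_trans (lem_addr _ _) ww'.
Qed.

Lemma saturated_colon s k w : sqfree s -> ~~ in_pow s k w ->
  (forall j, in_pow s k (w + U_(j))%MM || (k <= w j)) ->
  forall m, in_pow s k (m + w)%MM = (0 < deg [set j | in_pow s k (w + U_(j))%MM] m).
Proof.
move=> sq nw sat m; apply/idP/idP => [ip|/deg_gt0P [j]]; last first.
  rewrite inE -lepm_U => ipj Um; apply: in_pow_lepm ipj; rewrite addmC.
  exact: lepm_add Um (lepm_refl w).
rewrite lt0n; apply/negP => /eqP dm0.
case/negP: nw; apply: (in_pow_trunc (m := m)); rewrite 1?addmC //.
move=> j mj; case/orP: (sat j) => // ipj.
have : m j <= 0 by rewrite -dm0 leq_deg // inE.
lia.
Qed.

(* I^k = I^(k); the inclusion of I^k in I^(k) is cover_in_pow_deg. *)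
Definition normally_torsion_free s := forall k m, 0 < k ->
  (forall S, cover s S -> k <= deg S m) -> in_pow s k m.

End Monomials.

Section Polynomials.
Variables (K : fieldType) (n : nat).
Local Notation R := {mpoly K[n]}.
Local Open Scope ring_scope.
Implicit Types (m w : 'X_{1..n}) (s : seq 'X_{1..n}) (S T : {set 'I_n}) (p q : R).

Definition poly_pow s k p := all (in_pow s k) (msupp p).

Definition var_pow S k p := all (fun m => k <= deg S m)%N (msupp p).

Lemma poly_powX s k m : poly_pow s k 'X_[m] = in_pow s k m.
Proof. by rewrite /poly_pow msuppX /= andbT. Qed.

Lemma poly_pow0 s p : poly_pow s 0 p.
Proof. exact/allP. Qed.

Lemma poly_powM s a b p q :
  poly_pow s a p -> poly_pow s b q -> poly_pow s (a + b) (p * q).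
Proof.
move=> /allP pa /allP qb; apply/allP => m /msuppM_le /allpairsP [[m1 m2] /= [m1p m2q ->]].
by apply: in_powD; [apply: pa | apply: qb].
Qed.

Lemma is_ideal_poly_pow s k : is_ideal (poly_pow s k).
Proof.
split; first by rewrite /poly_pow msupp0.
  move=> p q /allP pk /allP qk; apply/allP => m /msuppD_le; rewrite mem_cat.
  by case/orP; [apply: pk | apply: qk].
by move=> r p pk; have := poly_powM (poly_pow0 s r) pk.
Qed.

Lemma poly_pow_prod s k (F : 'I_k -> R) :
  (forall l, poly_pow s 1 (F l)) -> poly_pow s k (\prod_(l < k) F l).
Proof.
elim: k F => [|k IHk] F F1; first by rewrite big_ord0 /poly_pow msupp1.
rewrite big_ord_recr /=.
have := poly_powM (IHk (fun l => F (widen_ord (leqnSn k) l)) (fun l => F1 _)) (F1 ord_max).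
by rewrite addn1.
Qed.

Lemma monomial_idealX s g : g \in s -> monomial_ideal K s 'X_[g].
Proof.
move=> gs; have ig : (index g s < size [seq 'X_[m] : R | m <- s])%N.
  by rewrite size_map index_mem.
exists (fun j => ((nat_of_ord j == index g s)%:R : R)).
rewrite (bigD1 (Ordinal ig)) //= eqxx mul1r big1 ?addr0.
  by rewrite (nth_map 0%MM) ?nth_index // index_mem.
move=> j jg; suff /negbTE -> : nat_of_ord j != index g s by rewrite mul0r.
by apply: contra_neq jg => ji; apply: val_inj.
Qed.

Lemma monomial_ideal_poly_pow1 s p : monomial_ideal K s p -> poly_pow s 1 p.
Proof.
move=> [c ->]; apply: ideal_big (is_ideal_poly_pow s 1) _ => j _.
have js : (j < size s)%N by rewrite -(size_map (fun m => 'X_[m] : R)).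
rewrite (nth_map 0%MM) // -[1%N]add0n; apply: poly_powM (poly_pow0 _ _) _.
by rewrite poly_powX in_pow1_gen ?mem_nth.
Qed.

Lemma ideal_pow_monomialX s k m : in_pow s k m -> ideal_pow (monomial_ideal K s) k 'X_[m].
Proof.
elim: k m => [|k IHk] m /=; first by move=> _; apply: ideal_pow0.
move=> /hasP [g gs /andP [gm ip]].
rewrite -(submK gm) addmC mpolyXD; apply: ideal_powS (IHk _ ip).
exact: monomial_idealX.
Qed.

Lemma ideal_powE s k p : ideal_pow (monomial_ideal K s) k p <-> poly_pow s k p.
Proof.
split=> [[m [c [a [Ia ->]]]]|/allP pk].
  apply: ideal_big (is_ideal_poly_pow s k) _ => j _.
  have Ik l := monomial_ideal_poly_pow1 (Ia j l).
  by have := poly_powM (poly_pow0 s (c j)) (poly_pow_prod Ik); rewrite add0n.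
rewrite (mpolyE p) big_seq; apply: ideal_big (is_ideal_pow _ _) _ => m mp.
rewrite -mul_mpolyC; case: (is_ideal_pow (monomial_ideal K s) k) => _ _; apply.
by apply: ideal_pow_monomialX; apply: pk.
Qed.

Lemma poly_pow_mulX s k w (Q : pred 'X_{1..n}) :
  (forall m, in_pow s k (m + w)%MM = Q m) ->
  forall p, poly_pow s k (p * 'X_[w]) = all Q (msupp p).
Proof.
move=> colon p; rewrite /poly_pow (perm_all _ (msuppMX p w)) all_map.
by apply: eq_all => m /=; rewrite addmC colon.
Qed.

Lemma var_powX S k m : var_pow S k 'X_[m] = (k <= deg S m)%N.
Proof. by rewrite /var_pow msuppX /= andbT. Qed.

Lemma var_pow_subset S T k p : T \subset S -> var_pow T k p -> var_pow S k p.
Proof. by move=> TS /allP Tk; apply/allP => m /Tk /leq_trans; apply; apply: deg_subset. Qed.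

Lemma cover_var_pow s S k p : cover s S -> poly_pow s k p -> var_pow S k p.
Proof. by move=> covS /allP pk; apply/allP => m /pk; apply: cover_in_pow_deg. Qed.

Lemma var_powM S a b p q : var_pow S a p -> var_pow S b q -> var_pow S (a + b) (p * q).
Proof.
move=> /allP pa /allP qb; apply/allP => m /msuppM_le /allpairsP [[m1 m2] /= [m1p m2q ->]].
by rewrite degD leq_add ?pa ?qb.
Qed.

Lemma is_ideal_var_pow S k : is_ideal (var_pow S k).
Proof.
split; first by rewrite /var_pow msupp0.
  move=> p q /allP pk /allP qk; apply/allP => m /msuppD_le; rewrite mem_cat.
  by case/orP; [apply: pk | apply: qk].
by move=> r p pk; have := var_powM (_ : var_pow S 0 r) pk; apply; apply/allP.
Qed.

Lemma var_pow_mcoeff S k p m : var_pow S k p -> (deg S m < k)%N -> p@_m = 0.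
Proof.
move=> /allP pk mk; apply: memN_msupp_eq0; apply: contraTN mk => /pk.
by rewrite -leqNgt.
Qed.

Lemma var_pow1_sub (I : R -> Prop) S p : is_ideal I ->
  (forall v, v \in S -> I 'X_[U_(v)]) -> var_pow S 1 p -> I p.
Proof.
move=> Iid IU /allP p1; have [_ _ Imul] := Iid.
rewrite (mpolyE p) big_seq; apply: ideal_big Iid _ => m /p1 /deg_gt0P [v vS].
by rewrite -lepm_U -mul_mpolyC => /submK <-; rewrite mpolyXD mulrA; apply/Imul/IU.
Qed.

Definition deg_part S d p := \sum_(m <- msupp p | deg S m == d) p@_m *: 'X_[m].

Lemma mcoeff_deg_part S d p m :
  (deg_part S d p)@_m = if deg S m == d then p@_m else 0.
Proof.
rewrite raddf_sum /=; under eq_bigr do rewrite mcoeffZ mcoeffX.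
have [mp|mNp] := boolP (m \in msupp p).
  rewrite (big_rem m mp) /= eqxx mulr1 big1_seq ?addr0; first by case: (deg S m == d).
  move=> m' /andP [_]; rewrite mem_rem_uniq ?msupp_uniq // inE => /andP [m'm _].
  by rewrite (negbTE m'm) mulr0.
rewrite big1_seq; first by rewrite memN_msupp_eq0 //; case: (deg S m == d).
move=> m' /andP [_ m'p]; case: eqP => [m'm|_]; last by rewrite mulr0.
by rewrite -m'm m'p in mNp.
Qed.

Lemma msupp_deg_part S d p m : m \in msupp (deg_part S d p) -> deg S m = d.
Proof.
rewrite mcoeff_msupp mcoeff_deg_part.
by case: (deg S m =P d) => [//|_]; rewrite eqxx.
Qed.

Lemma deg_part_neq0 S d p m : m \in msupp p -> deg S m = d -> deg_part S d p != 0.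
Proof.
rewrite mcoeff_msupp => pm dm; apply: contraNneq pm => p0.
by rewrite -(mcoeff0 K m) -p0 mcoeff_deg_part dm eqxx.
Qed.

Lemma var_pow_sub_deg_part S d p : var_pow S d p -> var_pow S d.+1 (p - deg_part S d p).
Proof.
move=> /allP pd; apply/allP => m; rewrite mcoeff_msupp mcoeffB mcoeff_deg_part.
case: (deg S m =P d) => [_|dm]; first by rewrite subrr eqxx.
by rewrite subr0 -mcoeff_msupp => /pd; rewrite leq_eqVlt eq_sym => /predU1P [/dm|].
Qed.

Definition least_deg S d p := has (fun m => deg S m == d) (msupp p) && var_pow S d p.

(* With a0, b0 the nonzero parts of least S-degree of a and b, all monomials of
   a * b - a0 * b0 = a0 * (b - b0) + (a - a0) * b have S-degree > da + db. *)
Lemma least_degM S da db a b :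
  least_deg S da a -> least_deg S db b -> least_deg S (da + db) (a * b).
Proof.
move=> /andP [/hasP [ma maa /eqP dma] ada] /andP [/hasP [mb mbb /eqP dmb] bdb].
rewrite /least_deg var_powM // andbT.
set a0 := deg_part S da a; set b0 := deg_part S db b.
have : a0 * b0 != 0 by rewrite mulf_neq0 // (deg_part_neq0 maa, deg_part_neq0 mbb).
rewrite -msupp_eq0; case E : (msupp (a0 * b0)) => [//|m r] _.
have m0 : m \in msupp (a0 * b0) by rewrite E mem_head.
have dm : deg S m = (da + db)%N.
  move: m0 => /msuppM_le /allpairsP [[m1 m2] /= [/msupp_deg_part d1 /msupp_deg_part d2 ->]].
  by rewrite degD d1 d2.
have a0da : var_pow S da a0 by apply/allP => m' /msupp_deg_part ->.
have rest : var_pow S (da + db).+1 (a * b - a0 * b0).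
  have -> : a * b - a0 * b0 = a0 * (b - b0) + (a - a0) * b by ring.
  have [_ Dvar _] := is_ideal_var_pow S (da + db).+1; apply: Dvar.
    by rewrite -addnS var_powM ?var_pow_sub_deg_part.
  by rewrite -addSn var_powM ?var_pow_sub_deg_part.
apply/hasP; exists m; rewrite ?dm //.
rewrite mcoeff_msupp -(subrK (a0 * b0) (a * b)) mcoeffD (var_pow_mcoeff rest) ?dm //.
by rewrite add0r -mcoeff_msupp.
Qed.

Lemma var_pow_least_deg S k d p : least_deg S d p -> var_pow S k p = (k <= d)%N.
Proof.
move=> /andP [/hasP [m mp /eqP <-] pd]; apply/idP/idP => [/allP/(_ m mp)//|km].
by apply/allP => m' /(allP pd); apply: leq_trans km.
Qed.

Lemma var_powPn S k p : ~~ var_pow S k p -> exists2 d, (d < k)%N & least_deg S d p.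
Proof.
move=> /allPn [m0 m0p]; rewrite -ltnNge => m0k.
have exd : exists d, has (fun m => deg S m == d) (msupp p).
  by exists (deg S m0); apply/hasP; exists m0.
case: (ex_minnP exd) => d hasd dmin; exists d; last first.
  by rewrite /least_deg hasd; apply/allP => m mp; apply: dmin; apply/hasP; exists m.
by apply: leq_ltn_trans m0k; apply: dmin; apply/hasP; exists m0.
Qed.

Lemma var_pow_prime S : prime_ideal (var_pow S 1).
Proof.
split; [exact: is_ideal_var_pow | by rewrite /var_pow msupp1 /= deg0 |].
move=> p q pq; apply/orP; move: pq; apply: contraTT.
move=> /norP [/var_powPn [[|//] _ p0] /var_powPn [[|//] _ q0]].
by rewrite (var_pow_least_deg _ (least_degM p0 q0)).
Qed.

Lemma var_pow_primary S k p q :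
  var_pow S k.+1 (p * q) -> ~~ var_pow S k.+1 q -> var_pow S 1 p.
Proof.
move=> pqk /var_powPn [d dk qd]; apply: contraTT pqk => /var_powPn [[|//] _ p0].
by rewrite (var_pow_least_deg _ (least_degM p0 qd)) -ltnNge.
Qed.

End Polynomials.

Section Copersistence.
Variables (K : fieldType) (n : nat).
Local Notation R := {mpoly K[n]}.
Local Notation Ipow s k := (ideal_pow (monomial_ideal K s) k).
Local Open Scope ring_scope.
Implicit Types (m w : 'X_{1..n}) (s : seq 'X_{1..n}) (S T : {set 'I_n}) (p f : R).

Lemma Ass_colon s k T w : (forall m, in_pow s k (m + w)%MM = (0 < deg T m)%N) ->
  Ass (Ipow s k) (var_pow T 1).
Proof.
move=> colon; split; first exact: var_pow_prime.
by exists 'X_[w] => p; rewrite ideal_powE (poly_pow_mulX colon).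
Qed.

Lemma Ass_mincover s T k : sqfree s -> mincover s T -> (0 < k)%N ->
  Ass (Ipow s k) (var_pow T 1).
Proof.
move=> sq minT k0; have covT : cover s T by case/andP: minT.
have [T0|[v vT]] := set_0Vmem T.
  apply: (@Ass_colon _ _ _ 0%MM) => m; rewrite T0 deg_set0; apply/negbTE/negP.
  by move/(cover_in_pow_deg covT); rewrite T0 deg_set0 leqNgt k0.
pose w := [multinom (if j \in T then (if j == v then k.-1 else 0) else k)%N | j < n].
have degw : deg T w = k.-1.
  rewrite /deg (bigD1 v) //= mnmE vT eqxx big1 ?addn0 // => j /andP [jT jv].
  by rewrite mnmE jT (negbTE jv).
apply: (@Ass_colon _ _ _ w) => m; apply/idP/idP.
  by move/(cover_in_pow_deg covT); rewrite degD degw; lia.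
move=> m0; apply: (mincover_in_pow sq minT); first by rewrite degD degw; lia.
by move=> j jT; rewrite mnmDE mnmE (negbTE jT) leq_addl.
Qed.

Lemma poly_pow1_sqr s p : sqfree s -> poly_pow s 1 (p * p) -> poly_pow s 1 p.
Proof.
move=> sq pp; apply/allP => m mp; apply: in_pow1_cover => // S covS.
have [_ _ Smul] := var_pow_prime K S.
by case: (Smul _ _ (cover_var_pow covS pp)) => /allP/(_ m mp).
Qed.

Lemma Ass_pow1_mincover s T : sqfree s -> Ass (Ipow s 1) (var_pow T 1) -> mincover s T.
Proof.
move=> sq [_ [f colon]].
have colonE p : var_pow T 1 p <-> poly_pow s 1 (p * f) by rewrite -ideal_powE.
have covT : cover s T.
  apply/allP => g gs; rewrite -(var_powX K); apply/colonE.
  have := poly_powM (_ : poly_pow s 1 'X_[g]) (poly_pow0 s f).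
  by apply; rewrite poly_powX in_pow1_gen.
rewrite /mincover covT; apply/forall_inP => v vT; apply: contraT => noprv.
have covTv := cover_setD1 covT vT noprv.
have vf : poly_pow s 1 ('X_[U_(v)] * f) by apply/colonE; rewrite var_powX degU vT.
have [_ _ Tvmul] := var_pow_prime K (T :\ v).
case: (Tvmul _ _ (cover_var_pow covTv vf)) => [|fTv].
  by rewrite var_powX degU !inE eqxx.
have ff : poly_pow s 1 (f * f) by apply/colonE; apply: var_pow_subset (subD1set T v) fTv.
have [_ T1 _] := var_pow_prime K T.
by case: T1; apply/colonE; rewrite mul1r; apply: poly_pow1_sqr ff.
Qed.

(* With x^w maximal outside I^k, (I^k : x^w) = P_T is associated to I, so T is
   a minimal cover.  Then x^W x^w \in I^k for W equal to k off T and to 0 on T,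
   whereas x^W \notin P_T. *)
Lemma copersistent_ntf s : sqfree s -> copersistent (monomial_ideal K s) ->
  normally_torsion_free s.
Proof.
move=> sq coI k m k0 covm; apply: contraT => nm.
have [w [mw nw sat]] := exists_saturated nm.
set T := [set j | in_pow s k (w + U_(j))%MM].
have colon := saturated_colon sq nw sat.
have minT : mincover s T.
  by apply: Ass_pow1_mincover sq (copersistent_Ass_pow1 coI k0 (Ass_colon colon)).
have covT : cover s T by case/andP: minT.
pose W := [multinom (if j \in T then 0 else k)%N | j < n].
suff : in_pow s k (W + w)%MM by rewrite colon /deg big1 // => j jT; rewrite mnmE jT.
apply: in_pow_lepm (lepm_add (lepm_refl W) mw) _; rewrite addmC.
apply: (mincover_in_pow sq minT); first by rewrite degD; have := covm T covT; lia.
by move=> j jT; rewrite mnmDE mnmE (negbTE jT) leq_addl.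
Qed.

Lemma ntf_mincover_notin s k f : normally_torsion_free s -> ~~ poly_pow s k.+1 f ->
  exists2 T, mincover s T & ~~ var_pow T k.+1 f.
Proof.
move=> ntf /allPn [m mf nm].
have : ~~ [forall S, cover s S ==> (k.+1 <= deg S m)%N].
  by apply: contra nm => /forallP covm; apply: ntf => // S /(implyP (covm S)).
move=> /forallPn [S]; rewrite negb_imply -ltnNge => /andP [covS degS].
have [T TS minT] := exists_mincover covS; exists T => //.
by apply/allPn; exists m; rewrite // -ltnNge; apply: leq_ltn_trans (deg_subset m TS) degS.
Qed.

Lemma ntf_Ass_var_pow s k (P : R -> Prop) : sqfree s -> normally_torsion_free s ->
  Ass (Ipow s k.+1) P -> exists2 T, mincover s T & forall p, P p <-> var_pow T 1 p.
Proof.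
move=> sq ntf [Pprime [f colon]]; have [Pideal P1 Pmul] := Pprime.
have colonE p : P p <-> poly_pow s k.+1 (p * f) by rewrite -ideal_powE.
have nf : ~~ poly_pow s k.+1 f by apply/negP => fk; apply: P1; apply/colonE; rewrite mul1r.
have [T minT nfT] := ntf_mincover_notin ntf nf.
have covT : cover s T by case/andP: minT.
have PT p : P p -> var_pow T 1 p.
  by move/colonE/(cover_var_pow covT)/var_pow_primary; apply.
exists T => // p; split; first exact: PT.
apply: var_pow1_sub Pideal _ => v vT.
have /andP [_ /forall_inP /(_ v vT) /hasP [g gs /andP [gv /eqP gTv]]] := minT.
have Pg : P 'X_[g].
  apply: (prime_ideal_exp (k := k) Pprime); apply/colonE; rewrite mpolyXn.
  have := poly_powM (_ : poly_pow s k.+1 'X_[g *+ k.+1]) (poly_pow0 s f).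
  by rewrite addn0; apply; rewrite poly_powX in_pow_gen_exp.
have gU : (U_(v) <= g)%MM by rewrite lepm_U.
move: Pg; rewrite -(submK gU) mpolyXD => /Pmul [/PT|//].
by rewrite var_powX degB // degU vT (degD1 g vT) gTv; have := sq g gs v; lia.
Qed.

Lemma ntf_copersistent s : sqfree s -> normally_torsion_free s ->
  copersistent (monomial_ideal K s).
Proof.
move=> sq ntf k k1 P AP; have [Pprime _] := AP.
have [T minT PT] := ntf_Ass_var_pow sq ntf AP.
have [_ [f colon]] := Ass_mincover sq minT k1.
by split => //; exists f => p; apply: iff_trans (PT p) (colon p).
Qed.

End Copersistence.

Section Deletion.
Variables (n : nat) (i : 'I_n.+1).
Implicit Types (m : 'X_{1..n}) (x g : 'X_{1..n.+1}) (s : seq 'X_{1..n.+1}).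

Definition lift_mon m : 'X_{1..n.+1} :=
  [multinom (if unlift i j is Some j' then m j' else 0%N) | j < n.+1].

Lemma lift_monK : cancel lift_mon (delete_mon i).
Proof. by move=> m; apply/mnmP => j; rewrite !mnmE liftK. Qed.

Lemma lift_mon_i m : lift_mon m i = 0%N.
Proof. by rewrite mnmE unlift_none. Qed.

Lemma delete_monK x : x i = 0%N -> lift_mon (delete_mon i x) = x.
Proof.
move=> xi; apply/mnmP => j; rewrite mnmE.
by case: unliftP => [j' ->|->]; rewrite ?mnmE.
Qed.

Lemma deg_lift_mon S m : deg S (lift_mon m) = deg [set j | lift i j \in S] m.
Proof.
rewrite /deg big_mkcond /= (bigD1_ord i) //= lift_mon_i if_same add0n.
rewrite [RHS]big_mkcond /=; apply: eq_bigr => j _.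
by rewrite inE mnmE liftK.
Qed.

Lemma mem_deletion_gens s g : g \in s -> g i = 0%N -> delete_mon i g \in deletion_gens i s.
Proof. by move=> gs gi; rewrite map_f // mem_filter gi eqxx. Qed.

Lemma deletion_gensP s (g' : 'X_{1..n}) :
  g' \in deletion_gens i s -> exists2 g, g \in s & g' = delete_mon i g /\ g i = 0%N.
Proof. by case/mapP => g; rewrite mem_filter => /andP [/eqP gi gs] ->; exists g. Qed.

Lemma in_pow_deletion s k x : x i = 0%N -> in_pow s k x ->
  in_pow (deletion_gens i s) k (delete_mon i x).
Proof.
elim: k x => [|k IHk] x //= xi /hasP [g gs /andP [gx ip]].
have gi : g i = 0%N by apply/eqP; rewrite -leqn0 -xi; apply: (mnm_lepP gx).
apply/hasP; exists (delete_mon i g); first exact: mem_deletion_gens.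
apply/andP; split; first by apply/mnm_lepP => j; rewrite !mnmE; apply: (mnm_lepP gx).
have -> : (delete_mon i x - delete_mon i g)%MM = delete_mon i (x - g).
  by apply/mnmP => j; rewrite !mnmE.
by apply: IHk ip; rewrite mnmBE xi.
Qed.

Lemma cover_deletion s S : cover s S -> cover (deletion_gens i s) [set j | lift i j \in S].
Proof.
move=> /allP covS; apply/allP => _ /deletion_gensP [g gs [-> gi]].
by rewrite -deg_lift_mon delete_monK // covS.
Qed.

Lemma sqfree_deletion s : sqfree s -> sqfree (deletion_gens i s).
Proof. by move=> sq _ /deletion_gensP [g gs [-> _]] j; rewrite mnmE sq. Qed.

Lemma ntf_deletion s : normally_torsion_free s ->
  normally_torsion_free (deletion_gens i s).
Proof.
move=> ntf k m k0 covm; rewrite -(lift_monK m).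
apply: in_pow_deletion (lift_mon_i m) (ntf _ _ k0 _) => S covS.
by rewrite deg_lift_mon covm // cover_deletion.
Qed.

End Deletion.

Theorem proposition3p23 (K : fieldType) (n : nat) (i : 'I_n.+1)
    (s : seq 'X_{1..n.+1}) :
  all (@squarefree_mon n.+1) s ->
  minimal_mon_gens s ->
  copersistent (monomial_ideal K s) ->
  copersistent (monomial_ideal K (deletion_gens i s)).
Proof.
(* The argument works for any square-free generating set, minimal or not. *)
move=> sqf_s _ coI.
have sq : sqfree s by move=> g /(allP sqf_s) /forallP.
apply: ntf_copersistent; first exact: sqfree_deletion.
exact/ntf_deletion/(copersistent_ntf sq coI).
Qed.
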